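(* Assume the standing setup with $Z=\mathbb{Z}/p$, $p$ prime. Let $G$ be a profinite group and $N_1\le N_2$ closed normal subgroups of $G$ contained in $\bar T(G)$, with projections $\pi_i\colon G\to G/N_i$. The following are equivalent: (a) $\inf\colon H^2(G/N_2)_{\pi_2}\to H^2(G/N_1)_{\pi_1}$ is an isomorphism; (b) $\inf\colon H^2(G/N_2)_{\pi_2}\to H^2(G/N_1)_{\pi_1}$ is injective; (c) $N_1T(G)=N_2T(G)$.
   Context: Standing setup: all homomorphisms of profinite groups are continuous. For profinite groups $\mathbb{U}$ and $G$, $T^{\mathbb{U}}(G)$ denotes the intersection of the kernels of all continuous homomorphisms $G\to\mathbb{U}$. Fix a finite abelian group $Z$ and a nonempty set $\Omega$ of central extensions of profinite groups $\omega\colon 0\to Z\to\mathbb{U}_\omega\xrightarrow{\lambda_\omega}\bar{\mathbb{U}}_\omega\to1$ such that for every $\omega$: (I) there are finitely many continuous homomorphisms $\gamma_1,\dots,\gamma_n\colon\bar{\mathbb{U}}_\omega\to\mathbb{U}_\omega$ with $\bigcap_i\operatorname{Ker}(\gamma_i)=\{1\}$; (II) $Z$ embeds as a closed subgroup of $\bar{\mathbb{U}}_\omega$. For a profinite group $G$ set $T(G)=\bigcap_{\omega\in\Omega}T^{\mathbb{U}_\omega}(G)$ and $\bar T(G)=\bigcap_{\omega\in\Omega}T^{\bar{\mathbb{U}}_\omega}(G)$. Here $H^i(G)=H^i(G,\mathbb{Z}/p)$ with trivial action. $\alpha_\omega\in H^2(\bar{\mathbb{U}}_\omega)$ is the class of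 $\omega$, and $\bar\rho^*(\alpha_\omega)$ its pullback along $\bar\rho$. For $N\trianglelefteq G$ closed with projection $\pi\colon G\to G/N$, a continuous $\bar\rho\colon G/N\to\bar{\mathbb{U}}_\omega$ is $\pi$-liftable if there is a continuous $\rho\colon G\to\mathbb{U}_\omega$ with $\lambda_\omega\circ\rho=\bar\rho\circ\pi$, and $H^2(G/N)_\pi$ is the subgroup of $H^2(G/N)$ generated by all $\bar\rho^*(\alpha_\omega)$ with $\omega\in\Omega$ and $\bar\rho$ $\pi$-liftable. *)

From HB Require Import structures.
From mathcomp Require Import all_boot all_order all_algebra.
From mathcomp Require Import boolp classical_sets topology.
Set Implicit Arguments. Unset Strict Implicit. Unset Printing Implicit Defensive.
Import GRing.Theory.
Local Open Scope classical_set_scope.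

Record profGroup := ProfGroup {
  pg_car :> topologicalType;
  pg_mul : pg_car -> pg_car -> pg_car;
  pg_inv : pg_car -> pg_car;
  pg_one : pg_car;
  pg_mulA : forall x y z, pg_mul x (pg_mul y z) = pg_mul (pg_mul x y) z;
  pg_mul1 : forall x, pg_mul pg_one x = x;
  pg_mulV : forall x, pg_mul (pg_inv x) x = pg_one;
  pg_mul_cont : continuous (fun xy : pg_car * pg_car => pg_mul xy.1 xy.2);
  pg_inv_cont : continuous pg_inv;
  pg_compact : compact [set: pg_car];
  pg_hausdorff : hausdorff_space pg_car;
  pg_totdisc : totally_disconnected [set: pg_car]
}.

Definition conthom (G H : profGroup) (f : G -> H) : Prop :=
  continuous f /\ forall x y, f (pg_mul x y) = pg_mul (f x) (f y).

Definition closed_normal (G : profGroup) (N : set G) : Prop :=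
  [/\ closed N, N (pg_one G),
      (forall x y, N x -> N y -> N (pg_mul x (pg_inv y))) &
      (forall x g, N x -> N (pg_mul (pg_inv g) (pg_mul x g)))].

Definition TU (U G : profGroup) : set G :=
  [set x | forall f : G -> U, conthom f -> f x = pg_one U].

Definition setmul (G : profGroup) (A B : set G) : set G :=
  [set z | exists2 a, A a & exists2 b, B b & z = pg_mul a b].

Record cext (p : nat) := CExt {
  ce_U : profGroup;
  ce_Ub : profGroup;
  ce_iota : 'Z_p -> ce_U;
  ce_lam : ce_U -> ce_Ub;
  ce_iota_hom : forall a b, ce_iota (a + b)%R = pg_mul (ce_iota a) (ce_iota b);
  ce_iota_inj : injective ce_iota;
  ce_iota_closed : closed (range ce_iota);
  ce_iota_central : forall a u, pg_mul (ce_iota a) u = pg_mul u (ce_iota a);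
  ce_lam_hom : conthom ce_lam;
  ce_lam_surj : forall y, exists x, ce_lam x = y;
  ce_exact : forall u, ce_lam u = pg_one ce_Ub <-> exists a, ce_iota a = u
}.

Definition condI p (w : cext p) : Prop :=
  exists (n : nat) (g : 'I_n -> ce_Ub w -> ce_U w),
    (forall i, conthom (g i)) /\
    (forall x, (forall i, g i x = pg_one (ce_U w)) -> x = pg_one (ce_Ub w)).

Definition condII p (w : cext p) : Prop :=
  exists j : 'Z_p -> ce_Ub w,
    [/\ injective j, closed (range j) &
        forall a b, j (a + b)%R = pg_mul (j a) (j b)].

(* Cochains of G/N are modelled as N-invariant continuous cochains on G
   (continuity into the discrete group Z/p = open fibres). *)
Definition cochain1 p (G : profGroup) (N : set G) (g : G -> 'Z_p) : Prop :=
  (forall z, open (g @^-1` [set z])) /\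
  (forall x n, N n -> g (pg_mul x n) = g x).

Definition cochain2 p (G : profGroup) (N : set G) (f : G -> G -> 'Z_p) : Prop :=
  (forall z, open ((fun xy : G * G => f xy.1 xy.2) @^-1` [set z])) /\
  (forall x y n m, N n -> N m -> f (pg_mul x n) (pg_mul y m) = f x y).

Definition cocycle2 p (G : profGroup) (N : set G) (f : G -> G -> 'Z_p) : Prop :=
  cochain2 N f /\
  forall x y z, (f y z - f (pg_mul x y) z + f x (pg_mul y z) - f x y = 0)%R.

Definition cohom p (G : profGroup) (N : set G) (f1 f2 : G -> G -> 'Z_p) : Prop :=
  exists g : G -> 'Z_p, cochain1 N g /\
    forall x y, (f1 x y - f2 x y = g y - g (pg_mul x y) + g x)%R.

(* c is a cocycle representing the class alpha_w of the extension w,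
   computed from the continuous set-theoretic section s of lambda_w *)
Definition ext_cocycle p (w : cext p) (c : ce_Ub w -> ce_Ub w -> 'Z_p) : Prop :=
  exists s : ce_Ub w -> ce_U w,
    [/\ continuous s, (forall a, ce_lam (s a) = a) &
        forall a b, ce_iota w (c a b) =
          pg_mul (pg_mul (s a) (s b)) (pg_inv (s (pg_mul a b)))].

(* rb : G -> Ubar trivial on N is (via pi) a continuous homomorphism
   G/N -> Ubar; it is pi-liftable if some continuous rho : G -> U
   satisfies lambda o rho = rb o pi *)
Definition liftable p (G : profGroup) (N : set G) (w : cext p)
    (rb : G -> ce_Ub w) : Prop :=
  [/\ conthom rb, (forall n, N n -> rb n = pg_one (ce_Ub w)) &
      exists rho : G -> ce_U w, conthom rho /\ forall x, ce_lam (rho x) = rb x].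

(* f (a 2-cocycle of G/N) lies in H^2(G/N)_pi: its class is in the subgroup
   generated by the pullbacks rb^*(alpha_w), w in Omega, rb pi-liftable *)
Definition in_H2pi p (I : Type) (Om : I -> cext p) (G : profGroup) (N : set G)
    (f : G -> G -> 'Z_p) : Prop :=
  cocycle2 N f /\
  exists (n : nat) (w : 'I_n -> I)
         (rb : forall i, G -> ce_Ub (Om (w i)))
         (c : forall i, ce_Ub (Om (w i)) -> ce_Ub (Om (w i)) -> 'Z_p)
         (k : 'I_n -> int),
    (forall i, liftable N (rb i)) /\ (forall i, ext_cocycle (c i)) /\
    cohom N f (fun x y => \sum_(i < n) (c i (rb i x) (rb i y)) *~ k i)%R.

Definition T_Om p (I : Type) (Om : I -> cext p) (G : profGroup) : set G :=
  [set x | forall i, @TU (ce_U (Om i)) G x].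
Definition Tbar_Om p (I : Type) (Om : I -> cext p) (G : profGroup) : set G :=
  [set x | forall i, @TU (ce_Ub (Om i)) G x].
Arguments T_Om {p I} Om G _.
Arguments Tbar_Om {p I} Om G _.

From HB Require Import structures.
From mathcomp Require Import all_boot all_order all_algebra.
From mathcomp Require Import boolp classical_sets topology.
From mathcomp Require Import finmap ring.

(* Classes are represented by N-invariant cocycles on G.  The basic
   computation (section [LiftCochain]) is that if rho : G -> U lifts
   rb : G -> Ubar and s is a continuous section of lambda, the pulled-back
   extension cocycle c(rb x, rb y) is minus the coboundary of the locally
   constant cochain x |-> iota^-1(rho x * s(rb x)^-1) on G, which is shifted
   by iota^-1(rho t) under translation by t in ker rb.  From this:
   - inflation is always surjective, since the maps rb are trivial on
     N2 <= Tbar(G); hence (a) <-> (b)  [inf_surjective];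
   - every class is dH with H(x n) = H x - psi n, psi vanishing on T(G)
     [H2pi_repr]; the difference of two such normal forms is a locally
     constant homomorphism G -> Z/p, which kills Tbar(G) by (II); this
     gives (c) -> (b)  [inf_injective_of_NT];
   - for (b) -> (c), compactness and linear algebra over F_p produce a class
     trivial over N1 but not over N2  [NT_of_inf_injective].  This needs
     continuous sections of the extensions, which exist because profinite
     spaces are zero-dimensional  [profinite_zero_dimensional,
     cext_section]. *)

Set Implicit Arguments. Unset Strict Implicit. Unset Printing Implicit Defensive.
Import GRing.Theory.
Local Open Scope classical_set_scope.

Section GroupLaws.
Variable G : profGroup.
Local Notation "x \* y" := (pg_mul x y) (at level 40, left associativity).
Local Notation one := (pg_one G).
Local Notation inv := (@pg_inv G).

Lemma pg_mulVr (x : G) : x \* inv x = one.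
Proof.
rewrite -[x \* inv x]pg_mul1 -[in X in X \* _](pg_mulV (inv x)).
by rewrite -pg_mulA [inv x \* _]pg_mulA pg_mulV pg_mul1 pg_mulV.
Qed.

Lemma pg_mulr1 (x : G) : x \* one = x.
Proof. by rewrite -(pg_mulV x) pg_mulA pg_mulVr pg_mul1. Qed.

Lemma pg_mulK (x y : G) : inv x \* (x \* y) = y.
Proof. by rewrite pg_mulA pg_mulV pg_mul1. Qed.

Lemma pg_mulKV (x y : G) : x \* (inv x \* y) = y.
Proof. by rewrite pg_mulA pg_mulVr pg_mul1. Qed.

Lemma pg_mulrK (x y : G) : (y \* x) \* inv x = y.
Proof. by rewrite -pg_mulA pg_mulVr pg_mulr1. Qed.

Lemma pg_mulrKV (x y : G) : (y \* inv x) \* x = y.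
Proof. by rewrite -pg_mulA pg_mulV pg_mulr1. Qed.

Lemma pg_mulIr (x y z : G) : y \* x = z \* x -> y = z.
Proof. by move=> h; rewrite -(pg_mulrK x y) h pg_mulrK. Qed.

Lemma pg_idem (x : G) : x \* x = x -> x = one.
Proof. by move=> h; rewrite -(pg_mulK x x) h pg_mulV. Qed.

Lemma pg_invK (x : G) : inv (inv x) = x.
Proof. by apply: (@pg_mulIr (inv x)); rewrite pg_mulV pg_mulVr. Qed.

Lemma central_cancel (P Q A B C : G) :
  (forall u, P \* u = u \* P) -> (forall u, Q \* u = u \* Q) ->
  P \* A \* (Q \* B) \* C \* inv P \* inv Q = A \* B \* C.
Proof.
move=> cP cQ.
have -> : P \* A \* (Q \* B) \* C = P \* (A \* (Q \* B) \* C) by rewrite !pg_mulA.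
rewrite cP pg_mulrK.
have -> : A \* (Q \* B) \* C = Q \* (A \* B \* C).
  by rewrite (pg_mulA A Q B) -(cQ A) !pg_mulA.
by rewrite cQ pg_mulrK.
Qed.

Lemma pg_mul_cont2 (T : topologicalType) (f g : T -> G) :
  continuous f -> continuous g -> continuous (fun t => f t \* g t).
Proof.
move=> cf cg t.
apply: (@continuous_comp _ _ _ (fun t => (f t, g t)) (fun xy : G * G => xy.1 \* xy.2)).
  by apply: cvg_pair; [exact: cf | exact: cg].
exact: pg_mul_cont.
Qed.

Lemma pg_lmul_cont (a : G) : continuous (fun v : G => a \* v).
Proof. by apply: pg_mul_cont2 => x; [exact: cvg_cst | exact: cvg_id]. Qed.

Lemma closed_normalM (N : set G) : closed_normal N ->
  forall a b, N a -> N b -> N (a \* b).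
Proof.
case=> _ N1 NB _ a b Na Nb.
have Nib : N (inv b) by rewrite -[inv b]pg_mul1; apply: NB.
by rewrite -[b]pg_invK; apply: NB.
Qed.

End GroupLaws.

Section ContinuousHomomorphisms.

Lemma conthom1 (G H : profGroup) (f : G -> H) : conthom f -> f (pg_one G) = pg_one H.
Proof. by case=> _ fM; apply: pg_idem; rewrite -fM pg_mul1. Qed.

Lemma conthomV (G H : profGroup) (f : G -> H) x :
  conthom f -> f (pg_inv x) = pg_inv (f x).
Proof.
move=> hf; apply: (@pg_mulIr _ (f x)); rewrite pg_mulV -hf.2 pg_mulV.
exact: conthom1.
Qed.

Lemma conthom_comp (G H K : profGroup) (f : G -> H) (g : H -> K) :
  conthom f -> conthom g -> conthom (g \o f).
Proof.
move=> [cf mf] [cg mg]; split; last by move=> x y /=; rewrite mf mg.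
by move=> x; apply: continuous_comp; [exact: cf | exact: cg].
Qed.

Lemma conthom_one (G H : profGroup) : conthom (fun _ : G => pg_one H).
Proof. by split=> [x|x y]; [exact: cvg_cst | rewrite pg_mul1]. Qed.

Lemma T_Om1 p (I : Type) (Om : I -> cext p) (G : profGroup) : T_Om Om G (pg_one G).
Proof. by move=> i f hf; exact: conthom1. Qed.

Lemma T_OmM p (I : Type) (Om : I -> cext p) (G : profGroup) (a b : G) :
  T_Om Om G a -> T_Om Om G b -> T_Om Om G (pg_mul a b).
Proof. by move=> Ta Tb i f hf; rewrite hf.2 (Ta i f hf) (Tb i f hf) pg_mul1. Qed.

End ContinuousHomomorphisms.

(* Locally constant maps: all fibres are open.  With discrete coefficients
   these are exactly the continuous cochains. *)
Definition locally_constant (T : topologicalType) (R : Type) (h : T -> R) :=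
  forall z, open (h @^-1` [set z]).

Lemma locally_constantP (T : topologicalType) (R : Type) (h : T -> R) :
  locally_constant h <-> forall x, \forall y \near x, h y = h x.
Proof.
split=> [hh x|hh z]; first by move: (hh (h x)); rewrite openE => /(_ x erefl).
by rewrite openE => x /= hx; apply: filterS (hh x) => y /= ->.
Qed.

Section LocallyConstant.
Variable T : topologicalType.

Lemma lc_comp (S : topologicalType) (R : Type) (F : S -> T) (h : T -> R) :
  continuous F -> locally_constant h -> locally_constant (h \o F).
Proof.
move=> cF /locally_constantP hh; apply/locally_constantP => x.
exact: (cF x _ (hh (F x))).
Qed.

Lemma lc_cst (R : Type) (a : R) : locally_constant (fun _ : T => a).
Proof. by apply/locally_constantP => x; exact: filterE. Qed.

Lemma lc_sum (R : zmodType) n (h : 'I_n -> T -> R) :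
  (forall i, locally_constant (h i)) ->
  locally_constant (fun x => \sum_(i < n) h i x)%R.
Proof.
move=> hh; apply/locally_constantP => x.
have : \forall y \near x, forall i, h i y = h i x.
  by apply: filter_forall => i; exact: (proj1 (locally_constantP _) (hh i) x).
by apply: filterS => y hy; apply: eq_bigr => i _; rewrite hy.
Qed.

Lemma lc_map (R S : Type) (op : R -> S) (h : T -> R) :
  locally_constant h -> locally_constant (op \o h).
Proof.
move=> /locally_constantP hh; apply/locally_constantP => x.
by apply: filterS (hh x) => y /= ->.
Qed.

Lemma lc_map2 (R1 R2 S : Type) (op : R1 -> R2 -> S) (h1 : T -> R1) (h2 : T -> R2) :
  locally_constant h1 -> locally_constant h2 ->
  locally_constant (fun x => op (h1 x) (h2 x)).
Proof.
move=> /locally_constantP a /locally_constantP b; apply/locally_constantP => x.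
by apply: filterS (filterI (a x) (b x)) => y [-> ->].
Qed.

End LocallyConstant.

Local Open Scope ring_scope.

Definition cobound (G : profGroup) (R : zmodType) (g : G -> R) (x y : G) : R :=
  g y - g (pg_mul x y) + g x.

Section Coboundaries.
Variables (G : profGroup) (R : comPzRingType).

Lemma coboundD (g h : G -> R) x y :
  cobound (fun z => g z + h z) x y = cobound g x y + cobound h x y.
Proof. by rewrite /cobound; ring. Qed.

Lemma coboundB (g h : G -> R) x y :
  cobound (fun z => g z - h z) x y = cobound g x y - cobound h x y.
Proof. by rewrite /cobound; ring. Qed.

Lemma coboundN (g : G -> R) x y : cobound (fun z => - g z) x y = - cobound g x y.
Proof. by rewrite /cobound; ring. Qed.

Lemma coboundMz (g : G -> R) k x y :
  cobound (fun z => g z *~ k) x y = cobound g x y *~ k.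
Proof. by rewrite /cobound mulrzDl mulrzBl. Qed.

Lemma cobound_sum n (h : 'I_n -> G -> R) x y :
  cobound (fun z => \sum_(i < n) h i z) x y = \sum_(i < n) cobound (h i) x y.
Proof. by rewrite /cobound -sumrB -big_split. Qed.

Lemma cobound0_hom (chi : G -> R) : (forall x y, cobound chi x y = 0) ->
  forall x y, chi (pg_mul x y) = chi x + chi y.
Proof.
move=> h x y; apply/eqP; rewrite eq_sym -subr_eq0; apply/eqP.
by rewrite -(h x y) /cobound; ring.
Qed.

Lemma cobound_cocycle (g : G -> R) x y z :
  cobound g y z - cobound g (pg_mul x y) z + cobound g x (pg_mul y z)
    - cobound g x y = 0.
Proof. by rewrite /cobound pg_mulA; ring. Qed.

Lemma lc_cobound (g : G -> R) : locally_constant g ->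
  locally_constant (fun xy : G * G => cobound g xy.1 xy.2).
Proof.
move=> lg.
have lc_at (F : G * G -> G) : continuous F -> locally_constant (g \o F).
  by move=> cF; exact: lc_comp.
have l1 : locally_constant (fun xy : G * G => g xy.1).
  by apply: (lc_at fst) => xy; apply: cvg_fst.
have l2 : locally_constant (fun xy : G * G => g xy.2).
  by apply: (lc_at snd) => xy; apply: cvg_snd.
have lm := lc_at _ (@pg_mul_cont G).
exact: (lc_map2 +%R (lc_map2 (fun a b => a - b) l2 lm) l1).
Qed.

End Coboundaries.

Section Extension.
Variables (p : nat) (w : cext p).
Local Notation "x \* y" := (pg_mul x y) (at level 40, left associativity).
Local Notation U := (ce_U w).
Local Notation Ub := (ce_Ub w).
Local Notation io := (ce_iota w).
Local Notation lam := (@ce_lam _ w).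

(* The inverse of iota on the kernel of lambda (arbitrary elsewhere). *)
Definition iota_inv (u : U) : 'Z_p := odflt 0 [pick a | io a == u].

Lemma iota_invE a : iota_inv (io a) = a.
Proof.
rewrite /iota_inv; case: pickP => [b /eqP /ce_iota_inj -> //|].
by move=> /(_ a); rewrite eqxx.
Qed.

Lemma iota0 : io 0 = pg_one U.
Proof. by apply: pg_idem; rewrite -ce_iota_hom addr0. Qed.

Lemma iotaN a : io (- a) = pg_inv (io a).
Proof. by apply: (@pg_mulIr _ (io a)); rewrite -ce_iota_hom addNr pg_mulV iota0. Qed.

Lemma lam_iota a : lam (io a) = pg_one Ub.
Proof. by apply/(@ce_exact _ w); exists a. Qed.

Lemma iota_invK u : lam u = pg_one Ub -> io (iota_inv u) = u.
Proof. by move=> /(@ce_exact _ w) [a <-]; rewrite iota_invE. Qed.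

Lemma iota_invM u v : lam u = pg_one Ub -> lam v = pg_one Ub ->
  iota_inv (u \* v) = iota_inv u + iota_inv v.
Proof.
move=> lu lv; apply: (@ce_iota_inj _ w).
by rewrite ce_iota_hom !iota_invK // (ce_lam_hom w).2 lu lv pg_mul1.
Qed.

(* A continuous map into the (finite, discrete) kernel of lambda has
   locally constant iota-coordinates, U being Hausdorff. *)
Lemma lc_iota_inv (T : topologicalType) (F : T -> U) :
  continuous F -> (forall t, lam (F t) = pg_one Ub) ->
  locally_constant (iota_inv \o F).
Proof.
move=> cF hF; apply/locally_constantP => x.
have [a ea] : exists a, io a = F x by apply/(@ce_exact _ w).
have avoid b : b != a -> \forall u \near F x, u != io b.
  move=> nab; have cl : closed [set io b].
    by apply: accessible_closed_set1; apply: hausdorff_accessible; exact: pg_hausdorff.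
  have hne : F x != io b.
    by rewrite -ea; apply: contra nab => /eqP /ce_iota_inj ->.
  have : nbhs (F x) (~` [set io b]).
    by apply: open_nbhs_nbhs; split; [exact: closed_openC | move=> /= e; move/eqP: hne].
  by apply: filterS => u /= hu; apply/eqP.
have near_Fx : \forall u \near F x, forall b, b != a -> u != io b.
  apply: filter_forall => b.
  have [->|nab] := eqVneq b a; first by apply: filterE => u /negP.
  by apply: filterS (avoid b nab) => u hu _.
have near_x : \forall y \near x, forall b, b != a -> F y != io b := cF x _ near_Fx.
apply: filterS near_x => y /= hy.
rewrite -ea iota_invE; have [b eb] : exists b, io b = F y by apply/(@ce_exact _ w).
rewrite -eb iota_invE; apply/eqP; apply: contraT => nab.
by have := hy b nab; rewrite eb eqxx.
Qed.

End Extension.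

Section LiftCochain.
Variables (p : nat) (w : cext p).
Local Notation "x \* y" := (pg_mul x y) (at level 40, left associativity).
Local Notation U := (ce_U w).
Local Notation Ub := (ce_Ub w).
Local Notation io := (ce_iota w).
Local Notation lam := (@ce_lam _ w).
Variables (s : Ub -> U) (c : Ub -> Ub -> 'Z_p).
Hypothesis s_cont : continuous s.
Hypothesis s_section : forall a, lam (s a) = a.
Hypothesis c_def : forall a b, io (c a b) = s a \* s b \* pg_inv (s (a \* b)).
Variables (G : profGroup) (rho : G -> U).
Hypothesis rho_hom : conthom rho.

Definition lift_cochain (x : G) : 'Z_p :=
  iota_inv (rho x \* pg_inv (s (lam (rho x)))).

Lemma lift_cochainK x : io (lift_cochain x) = rho x \* pg_inv (s (lam (rho x))).
Proof.
apply: iota_invK.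
by rewrite (ce_lam_hom w).2 (conthomV _ (ce_lam_hom w)) s_section pg_mulVr.
Qed.

Lemma lc_lift_cochain : locally_constant lift_cochain.
Proof.
apply: lc_iota_inv => [|x]; last first.
  by rewrite (ce_lam_hom w).2 (conthomV _ (ce_lam_hom w)) s_section pg_mulVr.
apply: pg_mul_cont2; first exact: rho_hom.1.
move=> x; apply: continuous_comp; last exact: pg_inv_cont.
apply: continuous_comp; last exact: s_cont.
by apply: continuous_comp; [exact: rho_hom.1 | exact: (ce_lam_hom w).1].
Qed.

Lemma lift_cochain_shift x n : lam (rho n) = pg_one Ub ->
  lift_cochain (x \* n) = lift_cochain x + iota_inv (rho n).
Proof.
move=> hn; apply: (@ce_iota_inj _ w).
rewrite ce_iota_hom !lift_cochainK iota_invK // rho_hom.2 (ce_lam_hom w).2 hn.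
by rewrite pg_mulr1 -pg_mulA -(iota_invK hn) ce_iota_central pg_mulA.
Qed.

Lemma lift_cocycle x y :
  c (lam (rho x)) (lam (rho y)) = - cobound lift_cochain x y.
Proof.
have -> : - cobound lift_cochain x y =
    lift_cochain (x \* y) - lift_cochain x - lift_cochain y by rewrite /cobound; ring.
apply: (@ce_iota_inj _ w); rewrite !ce_iota_hom !iotaN c_def !lift_cochainK.
rewrite rho_hom.2 (ce_lam_hom w).2.
set A := s (lam (rho x)); set B := s (lam (rho y)).
set C := s (lam (rho x) \* lam (rho y)).
have eP : rho x \* pg_inv A = io (lift_cochain x) by rewrite lift_cochainK.
have eQ : rho y \* pg_inv B = io (lift_cochain y) by rewrite lift_cochainK.
rewrite eP eQ -[rho x](pg_mulrKV A) -[rho y](pg_mulrKV B) eP eQ.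
by rewrite central_cancel //; exact: ce_iota_central.
Qed.

End LiftCochain.

Lemma pullback_coboundary p (G : profGroup) m (E : 'I_m -> cext p)
    (rb : forall i, G -> ce_Ub (E i)) (rho : forall i, G -> ce_U (E i))
    (c : forall i, ce_Ub (E i) -> ce_Ub (E i) -> 'Z_p) (k : 'I_m -> int) :
  (forall i, conthom (rho i)) -> (forall i x, ce_lam (rho i x) = rb i x) ->
  (forall i, ext_cocycle (c i)) ->
  exists H : G -> 'Z_p,
  [/\ locally_constant H,
      forall x y, \sum_(i < m) c i (rb i x) (rb i y) *~ k i = - cobound H x y &
      forall x t, (forall i, rb i t = pg_one _) ->
        H (pg_mul x t) = H x + \sum_(i < m) iota_inv (rho i t) *~ k i].
Proof.
move=> rho_hom rho_lift c_ext.
have [s s_spec] : exists s : forall i, ce_Ub (E i) -> ce_U (E i), forall i,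
    [/\ continuous (s i), forall a, ce_lam (s i a) = a &
        forall a b, ce_iota _ (c i a b) =
          pg_mul (pg_mul (s i a) (s i b)) (pg_inv (s i (pg_mul a b)))].
  by exists (fun i => sval (cid (c_ext i))) => i; exact: svalP (cid (c_ext i)).
exists (fun x => \sum_(i < m) lift_cochain (s i) (rho i) x *~ k i); split.
- apply: lc_sum => i; apply: (lc_map (fun a => a *~ k i)).
  by have [? ? _] := s_spec i; exact: lc_lift_cochain.
- move=> x y; rewrite cobound_sum -sumrN; apply: eq_bigr => i _.
  have [_ s_sec c_def] := s_spec i.
  by rewrite coboundMz -mulNrz -!rho_lift (lift_cocycle s_sec c_def (rho_hom i)).
- move=> x t rb_t; rewrite -big_split; apply: eq_bigr => i _ /=.
  have [_ s_sec _] := s_spec i.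
  by rewrite -mulrzDl lift_cochain_shift ?rho_lift ?rb_t.
Qed.

Section H2pi.
Variables (p : nat) (I : Type) (Om : I -> cext p) (G : profGroup).
Local Notation "x \* y" := (pg_mul x y) (at level 40, left associativity).

Lemma liftable_trivial (N N' : set G) (i : I) (rb : G -> ce_Ub (Om i)) :
  (forall n, N' n -> rb n = pg_one _) -> liftable N rb -> liftable N' rb.
Proof. by move=> rbN' [rb_hom _ lift]; split. Qed.

Lemma Tbar_trivial (N : set G) (i : I) (rb : G -> ce_Ub (Om i)) n :
  N `<=` Tbar_Om Om G -> conthom rb -> N n -> rb n = pg_one _.
Proof. by move=> NT rb_hom Nn; exact: NT _ Nn i _ rb_hom. Qed.

Lemma choose_lifts (N : set G) m (w : 'I_m -> I) (rb : forall i, G -> ce_Ub (Om (w i))) :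
  (forall i, liftable N (rb i)) ->
  exists rho : forall i, G -> ce_U (Om (w i)),
    forall i, conthom (rho i) /\ forall x, ce_lam (rho i x) = rb i x.
Proof.
move=> rb_lift; have lift i : {rho : G -> ce_U (Om (w i)) |
    conthom rho /\ forall x, ce_lam (rho x) = rb i x}.
  by apply: cid; case: (rb_lift i).
by exists (fun i => sval (lift i)) => i; exact: svalP (lift i).
Qed.

Lemma pullback_in_H2pi (N : set G) m (w : 'I_m -> I)
    (rb : forall i, G -> ce_Ub (Om (w i)))
    (c : forall i, ce_Ub (Om (w i)) -> ce_Ub (Om (w i)) -> 'Z_p) (k : 'I_m -> int) :
  (forall i, liftable N (rb i)) -> (forall i, ext_cocycle (c i)) ->
  in_H2pi Om N (fun x y => \sum_(i < m) c i (rb i x) (rb i y) *~ k i).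
Proof.
move=> rb_lift c_ext.
have [rho rho_spec] := choose_lifts rb_lift.
have [H [lcH HE _]] := pullback_coboundary k (fun i => (rho_spec i).1)
  (fun i => (rho_spec i).2) c_ext.
split; last first.
  exists m, w, rb, c, k; split=> //; split=> //; exists (fun _ => 0).
  by split=> [|x y]; [split=> //; exact: lc_cst | rewrite subrr /cobound; ring].
split=> [|x y z]; last by rewrite !HE -oppr0 -(cobound_cocycle H x y z); ring.
split=> [z|x y a b Na Nb].
  have -> : (fun xy : G * G => \sum_(i < m) c i (rb i xy.1) (rb i xy.2) *~ k i) =
      (fun xy => - cobound H xy.1 xy.2) by apply: funext => xy; rewrite HE.
  by apply: (lc_map (fun a => - a)); exact: lc_cobound.
apply: eq_bigr => i _; have [[_ rbM] rbN _] := rb_lift i.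
by rewrite !rbM (rbN a) // (rbN b) // !pg_mulr1.
Qed.

Lemma in_H2pi_inf (N1 N2 : set G) f :
  N1 `<=` N2 -> in_H2pi Om N2 f -> in_H2pi Om N1 f.
Proof.
move=> h12 [[[fc fN] fco] [m [w [rb [c [k [rb_lift [c_ext [g [[gc gN] fg]]]]]]]]]].
split; first by split=> //; split=> // x y a b Na Nb; apply: fN; apply: h12.
exists m, w, rb, c, k; split.
  by move=> i; apply: liftable_trivial (rb_lift i) => n /h12; case: (rb_lift i) => _ + _; apply.
split=> //; exists g; split=> //; split=> // x a Na; apply: gN; exact: h12.
Qed.

(* Inflation H^2(G/N2)_pi2 -> H^2(G/N1)_pi1 is onto when N2 <= Tbar(G):
   the defining maps are then already trivial on N2. *)
Lemma inf_surjective (N1 N2 : set G) f :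
  N2 `<=` Tbar_Om Om G -> in_H2pi Om N1 f ->
  exists2 f', in_H2pi Om N2 f' & cohom N1 f f'.
Proof.
move=> N2T [_ [m [w [rb [c [k [rb_lift [c_ext f_coh]]]]]]]].
exists (fun x y => \sum_(i < m) c i (rb i x) (rb i y) *~ k i) => //.
apply: pullback_in_H2pi c_ext => i; apply: liftable_trivial (rb_lift i) => n.
by apply: Tbar_trivial; case: (rb_lift i).
Qed.

Lemma H2pi_repr (N : set G) f : in_H2pi Om N f ->
  exists H : G -> 'Z_p, exists psi : G -> 'Z_p,
  [/\ locally_constant H, forall x y, f x y = cobound H x y,
      forall x n, N n -> H (x \* n) = H x - psi n &
      forall t, T_Om Om G t -> psi t = 0].
Proof.
move=> [_ [m [w [rb [c [k [rb_lift [c_ext [g [[gc gN] fg]]]]]]]]]].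
have [rho rho_spec] := choose_lifts rb_lift.
have [H [lcH HE Hshift]] := pullback_coboundary k (fun i => (rho_spec i).1)
  (fun i => (rho_spec i).2) c_ext.
exists (fun x => g x - H x), (fun t => \sum_(i < m) iota_inv (rho i t) *~ k i).
split.
- exact: (lc_map2 (fun a b => a - b)).
- move=> x y; have e := fg x y; rewrite -/(cobound g x y) in e.
  by rewrite coboundB -e HE; ring.
- move=> x n Nn; rewrite gN // Hshift; first by ring.
  by move=> i; case: (rb_lift i) => _ -> .
- move=> t Tt; apply: big1 => i _.
  by rewrite (Tt _ _ (rho_spec i).1) -(iota0 (Om (w i))) iota_invE mul0rz.
Qed.

End H2pi.

(* By (II), a locally constant homomorphism chi : G -> Z/p composed with the
   embedding Z/p -> Ubar is a continuous homomorphism, so chi kills T^Ubar(G). *)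
Lemma lc_hom_TU p (w : cext p) (G : profGroup) (chi : G -> 'Z_p) :
  condII w -> locally_constant chi ->
  (forall x y, chi (pg_mul x y) = chi x + chi y) ->
  forall t, TU (ce_Ub w) t -> chi t = 0.
Proof.
move=> [j [j_inj _ jM]] lc_chi chiM t Tt.
have j0 : j 0 = pg_one (ce_Ub w) by apply: pg_idem; rewrite -jM addr0.
apply: j_inj; rewrite j0; apply: (Tt (j \o chi)); split; last first.
  by move=> x y /=; rewrite chiM jM.
apply/continuousP => O _.
have -> : (j \o chi) @^-1` O = \bigcup_(z in [set z | O (j z)]) (chi @^-1` [set z]).
  apply/seteqP; split=> x /=; first by move=> Ox; exists (chi x).
  by move=> [z /= Oz ->].
by apply: bigcup_open => z _; exact: lc_chi.
Qed.

Section InfInjective.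
Variables (p : nat) (I : Type) (i0 : I) (Om : I -> cext p).
Hypothesis hII : condII (Om i0).
Variables (G : profGroup) (N1 N2 : set G).
Hypotheses (hN2 : closed_normal N2) (h12 : N1 `<=` N2) (hN2T : N2 `<=` Tbar_Om Om G).
Local Notation "x \* y" := (pg_mul x y) (at level 40, left associativity).

Lemma N2_decompose : setmul N1 (T_Om Om G) = setmul N2 (T_Om Om G) ->
  forall n, N2 n -> exists2 a, N1 a & exists2 t, N2 t /\ T_Om Om G t & n = a \* t.
Proof.
move=> eNT n Nn.
have : setmul N2 (T_Om Om G) n.
  by exists n => //; exists (pg_one G); [exact: T_Om1 | rewrite pg_mulr1].
rewrite -eNT => -[a N1a [t Tt en]]; subst n; exists a => //; exists t => //; split=> //.
case: hN2 => _ _ NB NJ.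
have := NJ (a \* t \* pg_inv a) a (NB _ _ Nn (h12 N1a)).
by rewrite pg_mulrKV pg_mulK.
Qed.

(* With normal forms f_k = dH_k and
   f1 - f2 = dg, chi = H1 - H2 - g is a locally constant homomorphism, so
   it kills N2 <= Tbar(G); hence g is invariant under N2 /\ T(G), and thus
   under N2 = N1 (N2 /\ T(G)). *)
Lemma inf_injective_of_NT :
  setmul N1 (T_Om Om G) = setmul N2 (T_Om Om G) ->
  forall f1 f2, in_H2pi Om N2 f1 -> in_H2pi Om N2 f2 ->
    cohom N1 f1 f2 -> cohom N2 f1 f2.
Proof.
move=> eNT f1 f2 h1 h2 [g [[gc gN] fg]].
have [H1 [psi1 [lH1 e1 s1 z1]]] := H2pi_repr h1.
have [H2 [psi2 [lH2 e2 s2 z2]]] := H2pi_repr h2.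
pose chi x := H1 x - H2 x - g x.
have chiM : forall x y, chi (x \* y) = chi x + chi y.
  apply: cobound0_hom => x y; have e := fg x y; rewrite -/(cobound g x y) in e.
  by rewrite !coboundB -e1 -e2 -e subrr.
have lc_chi : locally_constant chi.
  by apply: (lc_map2 (fun a b => a - b)) => //; exact: (lc_map2 (fun a b => a - b)).
have g_shift x t : N2 t -> T_Om Om G t -> g (x \* t) = g x.
  move=> N2t Tt.
  have -> : g (x \* t) = H1 (x \* t) - H2 (x \* t) - chi (x \* t) by rewrite /chi; ring.
  rewrite s1 // s2 // chiM (lc_hom_TU hII lc_chi chiM (@hN2T t N2t i0)) z1 // z2 //.
  by rewrite /chi; ring.
exists g; split=> //; split=> // x n Nn.
have [a N1a [t [N2t Tt] ->]] := N2_decompose eNT Nn.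
by rewrite pg_mulA g_shift // gN.
Qed.

End InfInjective.

Section CompactSpaces.
Variable T : topologicalType.
Hypothesis T_compact : compact [set: T].

Lemma finite_subcover (J : Type) (O : J -> set T) :
  (forall j, open (O j)) -> (forall x, exists j, O j x) ->
  exists m (js : 'I_m -> J), forall x, exists j, O (js j) x.
Proof.
move=> oO covO.
have not_finI : ~ finI [set: {classic J}] (fun j => ~` O j).
  move=> fI; have PF := finI_filter fI; have [x [_ clx]] := T_compact PF filterT.
  have [j Ojx] := covO x.
  have [y [Ojy nOjy]] : ~` O j `&` O j !=set0.
    apply: (clx (~` O j)); first by exists (~` O j) => //; exact: finI_from1.
    exact: open_nbhs_nbhs.
  exact: Ojy nOjy.
have [F _ empty] : exists2 F : {fset {classic J}}, {subset F <= [set: {classic J}]} &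
    ~ (\bigcap_(j in [set j | j \in F]) (~` O j) !=set0).
  apply: contrapT => nF; apply: not_finI => F sF; apply: contrapT => nI.
  by apply: nF; exists F.
exists (size F), (tnth (in_tuple F)) => x.
have [j jF Ojx] : exists2 j, j \in F & O j x.
  apply: contrapT => nj; apply: empty; exists x => j /= jF; apply: contra_not nj => Ojx.
  by exists j.
have jlt : (index j F < size F)%N by rewrite index_mem.
by exists (Ordinal jlt); rewrite (tnth_nth j) /= nth_index.
Qed.

(* Two disjoint closed sets have disjoint open neighbourhoods
   (compact Hausdorff spaces are normal). *)
Lemma closed_separation (A B : set T) : hausdorff_space T ->
  closed A -> closed B -> A `&` B = set0 ->
  exists OA OB, [/\ open OA, open OB, A `<=` OA, B `<=` OB & OA `&` OB = set0].
Proof.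
move=> hT cA cB AB0.
have : set_nbhs A (~` B).
  apply/set_nbhsP; exists (~` B); split=> //; first exact: closed_openC.
  by move=> z Az Bz; have : (A `&` B) z by []; rewrite AB0.
have nT := compact_normal hT T_compact.
move=> /(nT _ cA) [V /set_nbhsP [W [oW AW WV]] clV].
exists W, (~` closure V); split=> //.
- exact/closed_openC/closed_closure.
- by move=> z Bz clz; exact: clV _ clz Bz.
- by apply/seteqP; split=> // z [/WV Vz]; apply; exact: subset_closure.
Qed.

End CompactSpaces.

Lemma clopen_finI (T : topologicalType) (F : finType) (P : F -> set T) :
  (forall i, clopen (P i)) -> clopen [set x | forall i, P i x].
Proof.
move=> cP; suff /(_ (enum F)) : forall s : seq F, clopen [set x | forall i, i \in s -> P i x].
  by congr clopen; apply/seteqP; split=> x /= h i => [|_]; apply: h; rewrite ?mem_enum.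
elim=> [|i s IH].
  have -> : [set x | forall i, i \in [::] -> P i x] = setT by apply/seteqP; split.
  exact: clopenT.
have -> : [set x | forall j, j \in i :: s -> P j x] =
    P i `&` [set x | forall j, j \in s -> P j x]; last exact: clopenI.
apply/seteqP; split=> x /= h; first by split=> [|j js]; apply: h; rewrite inE ?eqxx ?js ?orbT.
by move=> j; rewrite inE => /orP [/eqP ->|js]; [case: h | exact: h.2].
Qed.

Lemma clopen_split (T : topologicalType) (P O O' : set T) :
  clopen P -> open O -> open O' -> O `&` O' = set0 -> P `<=` O `|` O' ->
  clopen (P `&` O).
Proof.
move=> [oP cP] oO oO' OO' PO; split; first exact: openI.
have -> : P `&` O = P `&` ~` O'; last by apply: closedI => //; exact: open_closedC.
apply/seteqP; split=> z [Pz h]; split=> //.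
  by move=> O'z; have : (O `&` O') z by []; rewrite OO'.
by case: (PO _ Pz).
Qed.

Definition quasi_component (T : topologicalType) (x : T) : set T :=
  [set z | forall C, clopen C -> C x -> C z].

Section QuasiComponents.
Variable T : topologicalType.
Hypotheses (T_compact : compact [set: T]) (T_hausdorff : hausdorff_space T).

Lemma quasi_component_clopen_nbhs (x : T) (O : set T) :
  open O -> quasi_component x `<=` O ->
  exists P, [/\ clopen P, P x & P `<=` O].
Proof.
move=> oO QO.
pose O' (j : option {C : set T | clopen C /\ C x}) :=
  if j is Some C then ~` sval C else O.
have O'_open j : open (O' j).
  by case: j => [[C [[_ cC] _]]|] //=; exact: closed_openC.
have O'_cover z : exists j, O' j z.
  have [Oz|nOz] := pselect (O z); first by exists None.
  have [C [cC Cx nCz]] : exists C, [/\ clopen C, C x & ~ C z].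
    apply: contrapT => nC; apply: nOz; apply: QO => C cC Cx.
    by apply: contrapT => nCz; apply: nC; exists C.
  by exists (Some (exist _ C (conj cC Cx))).
have [m [js cov]] := finite_subcover T_compact O'_open O'_cover.
exists [set z | forall j, if js j is Some C then sval C z else True]; split.
- apply: clopen_finI => j.
  by case: (js j) => [C|] /=; [exact: (svalP C).1 | exact: clopenT].
- by move=> j; case: (js j) => [C|] //; exact: (svalP C).2.
- move=> z Pz; have [j] := cov z; have := Pz j; rewrite /O'.
  by case: (js j) => [C /= Cz /(_ Cz)|].
Qed.

Lemma quasi_component_split (x : T) (O O' : set T) :
  open O -> open O' -> O `&` O' = set0 -> quasi_component x `<=` O `|` O' ->
  quasi_component x `<=` O \/ quasi_component x `<=` O'.
Proof.
move=> oO oO' OO' QOO'.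
have [P [cP Px PO]] := quasi_component_clopen_nbhs (openU oO oO') QOO'.
have O'O : O' `&` O = set0 by rewrite setIC.
have [Ox|O'x] := QOO' x (fun C _ Cx => Cx).
  left=> z Qz; have [] := Qz _ (clopen_split cP oO oO' OO' PO) (conj Px Ox); by [].
have PO' : P `<=` O' `|` O by move=> z /PO; rewrite setUC.
right=> z Qz; have [] := Qz _ (clopen_split cP oO' oO O'O PO') (conj Px O'x); by [].
Qed.

Lemma quasi_component_connected (x : T) : connected (quasi_component x).
Proof.
apply: contrapT => /connectedPn [E [E0 QE [sep1 sep2]]].
have clQ : closed (quasi_component x).
  move=> z clz C cC Cx; apply: contrapT => nCz.
  have : nbhs z (~` C) by apply: open_nbhs_nbhs; split=> //; apply: closed_openC; case: cC.
  by move=> /clz [q [Qq nCq]]; exact: nCq (Qq C cC Cx).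
have clE b : closed (E b).
  have clEQ : closure (E b) `<=` E false `|` E true.
    rewrite -QE (proj1 (closure_id _) clQ); apply: closureS; rewrite QE.
    by case: b => z Ez; [right|left].
  rewrite (closure_id (E b)); apply/seteqP; split; first exact: subset_closure.
  move=> z clz; have := clEQ z clz; clear clEQ; case: b clz => clz -[] // Ez.
    by have : (E false `&` closure (E true)) z by []; rewrite sep2.
  by have : (closure (E false) `&` E true) z by []; rewrite sep1.
have [OA [OB [oA oB EA EB AB]]] := closed_separation T_compact T_hausdorff
  (clE false) (clE true) (separated_disjoint (conj sep1 sep2)).
have QO : quasi_component x `<=` OA `|` OB by rewrite QE => z [/EA|/EB]; [left|right].
have inQ b z : E b z -> quasi_component x z by rewrite QE; case: b; [right|left].
have [QA|QB] := quasi_component_split oA oB AB QO.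
  have [z Ez] := E0 true.
  have : (OA `&` OB) z by split; [exact: QA _ (inQ true z Ez) | exact: EB].
  by rewrite AB.
have [z Ez] := E0 false.
have : (OA `&` OB) z by split; [exact: EA | exact: QB _ (inQ false z Ez)].
by rewrite AB.
Qed.

(* Profinite spaces are zero-dimensional: quasi-components are connected,
   hence points. *)
Lemma profinite_zero_dimensional : totally_disconnected [set: T] -> zero_dimensional T.
Proof.
move=> tdT x y /eqP nxy; apply: contrapT => nsep.
have Qy : quasi_component x y.
  by move=> C cC Cx; apply: contrapT => nCy; apply: nsep; exists C.
suff : [set x] y by move=> /= eyx; apply: nxy.
rewrite -(tdT x I); exists (quasi_component x) => //.
by split=> //; exact: quasi_component_connected.
Qed.

End QuasiComponents.

(* We build a clopen "slice" C of U
   meeting every coset of iota(Z/p) exactly once; lambda restricted to C is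
   then a homeomorphism onto Ubar. *)
Section ContinuousSection.
Variables (p : nat) (w : cext p).
Local Notation "x \* y" := (pg_mul x y) (at level 40, left associativity).
Local Notation U := (ce_U w).
Local Notation Ub := (ce_Ub w).
Local Notation io := (ce_iota w).
Local Notation lam := (@ce_lam _ w).

Definition saturation (A : set U) : set U := [set v | exists z, A (io z \* v)].

Definition slice (E : set U) := forall v z, z != 0%R -> E v -> ~ E (io z \* v).

Lemma saturation_clopen A : clopen A -> clopen (saturation A).
Proof.
move=> cA.
have -> : saturation A = ~` [set v | forall z, ~ A (io z \* v)].
  apply/seteqP; split=> v /=; first by move=> [z Az] h; exact: h z Az.
  by move=> h; apply: contrapT => nh; apply: h => z Az; apply: nh; exists z.
apply: (@clopenC _ _ set0); apply: clopen_finI => z.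
apply: (preimage_clopen (f := fun v => io z \* v) (A := ~` A)).
  exact: (@clopenC _ _ set0).
exact: pg_lmul_cont.
Qed.

Lemma saturation_shift A z v : saturation A (io z \* v) -> saturation A v.
Proof. by move=> [z' h]; exists (z' + z)%R; rewrite ce_iota_hom -pg_mulA. Qed.

Lemma saturation_self A v : A v -> saturation A v.
Proof. by move=> Av; exists 0%R; rewrite iota0 pg_mul1. Qed.

Lemma iota_translate_neq z (u : U) : z != 0%R -> io z \* u <> u.
Proof.
move=> nz e; move/eqP: nz; apply; apply: (@ce_iota_inj _ w).
by rewrite iota0; apply: (@pg_mulIr _ u); rewrite e pg_mul1.
Qed.

(* Every point has a clopen slice neighbourhood: separate u from its
   finitely many kernel translates by clopen sets (U is zero-dimensional). *)
Lemma slice_nbhd (u : U) : exists E, [/\ clopen E, E u & slice E].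
Proof.
have zdU := profinite_zero_dimensional (@pg_compact U) (@pg_hausdorff U) (@pg_totdisc U).
have sep z : exists C : set U, [/\ clopen C, C u & (z != 0%R -> ~ C (io z \* u))].
  have [->|nz] := eqVneq z 0%R; first by exists setT; split=> //; exact: clopenT.
  have [|C [cC Cu nC]] := zdU u (io z \* u).
    by apply/eqP => e; exact: iota_translate_neq nz (esym e).
  by exists C; split.
have [Cs hCs] := choice sep.
pose D := [set v | forall z, Cs z v].
have cD : clopen D by apply: clopen_finI => z; case: (hCs z).
exists (D `&` [set v | forall z, z != 0%R -> ~ D (io z \* v)]); split.
- apply: clopenI => //; apply: clopen_finI => z.
  have [->|nz] := eqVneq z 0%R.
    apply: (eq_ind setT clopen clopenT).
    by apply/seteqP; split=> v //= _; rewrite eqxx.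
  apply: (eq_ind ((fun v => io z \* v) @^-1` (~` D)) clopen).
    by apply: preimage_clopen; [exact: (@clopenC _ _ set0) | exact: pg_lmul_cont].
  by apply/seteqP; split=> v /=; [move=> h _ | apply].
- split=> [z|z nz Dz]; first by case: (hCs z).
  by case: (hCs z) => _ _ /(_ nz); apply; exact: Dz.
- by move=> v z nz [_ h] [Dz _]; exact: (h z nz Dz).
Qed.

(* Gluing finitely many clopen slices: each new slice only contributes
   the cosets not yet met. *)
Fixpoint glue_slices (l : seq (set U)) : set U :=
  if l is E :: l' then E `|` (glue_slices l' `&` ~` saturation E) else set0.

Lemma glue_slicesP (l : seq (set U)) : (forall E, E \in l -> clopen E /\ slice E) ->
  [/\ clopen (glue_slices l), slice (glue_slices l) &
      forall E v, E \in l -> saturation E v -> saturation (glue_slices l) v].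
Proof.
elim: l => [_|E l IH hl] /=.
  by split; [exact: clopen0 | move=> v z _ [] | move=> E v; rewrite in_nil].
have [cE sE] := hl E (mem_head E l).
have [cG sG satG] := IH (fun E' E'l => hl E' (mem_behead (s := E :: l) E'l)).
split.
- apply: clopenU => //; apply: clopenI => //.
  exact: (@clopenC _ _ set0) (saturation_clopen cE).
- move=> v z nz [Ev|[Gv nSv]] [Ezv|[Gzv nSzv]].
  + exact: sE v z nz Ev Ezv.
  + by apply: nSzv; exists (- z)%R; rewrite pg_mulA -ce_iota_hom addNr iota0 pg_mul1.
  + by apply: nSv; exists z.
  + exact: sG v z nz Gv Gzv.
- move=> E' v; rewrite inE => /orP [/eqP -> [z Ez]|E'l SE'v]; first by exists z; left.
  have [[z Ez]|nSEv] := pselect (saturation E v); first by exists z; left.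
  have [z Gz] := satG E' v E'l SE'v.
  by exists z; right; split=> // /saturation_shift.
Qed.

(* Compactness: finitely many slices saturate to all of U. *)
Lemma clopen_slice_cover : exists C, [/\ clopen C, slice C & forall v, saturation C v].
Proof.
have [E hE] := choice slice_nbhd.
have open_sat u : open (saturation (E u)).
  by case: (hE u) => cE _ _; case: (saturation_clopen cE).
have cover_sat v : exists u, saturation (E u) v.
  by exists v; apply: saturation_self; case: (hE v).
have [m [us cov]] := finite_subcover (@pg_compact U) open_sat cover_sat.
pose l := [seq E (us j) | j <- enum 'I_m].
have [|cC sC satC] := @glue_slicesP l.
  by move=> _ /mapP [j _ ->]; case: (hE (us j)).
exists (glue_slices l); split=> // v; have [j Sv] := cov v.
by apply: satC Sv; apply: map_f; rewrite mem_enum.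
Qed.

(* A closed slice C saturating to U is a continuous section: each fibre of
   lambda meets C exactly once, and lambda is a closed map (compact to
   Hausdorff), so the inverse of lambda restricted to C is continuous. *)
Lemma slice_section (C : set U) :
  closed C -> slice C -> (forall v, saturation C v) ->
  exists s : Ub -> U, continuous s /\ forall a, lam (s a) = a.
Proof.
move=> cC sC satC.
have fibre a : exists x, C x /\ lam x = a.
  have [v lv] := ce_lam_surj a; have [z Cz] := satC v.
  by exists (io z \* v); rewrite (ce_lam_hom w).2 lam_iota pg_mul1.
have fibre_uniq x x' : C x -> C x' -> lam x = lam x' -> x = x'.
  move=> Cx Cx' exx'.
  have : lam (x' \* pg_inv x) = pg_one Ub.
    by rewrite (ce_lam_hom w).2 (conthomV _ (ce_lam_hom w)) -exx' pg_mulVr.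
  move=> /(@ce_exact _ w) [z ez]; have ex' : x' = io z \* x by rewrite ez pg_mulrKV.
  have [z0|nz] := eqVneq z 0%R; first by rewrite ex' z0 iota0 pg_mul1.
  by case: (sC x z nz Cx); rewrite -ex'.
pose s a := sval (cid (fibre a)).
have [sC' s_sec] : (forall a, C (s a)) /\ forall a, lam (s a) = a.
  by split=> a; case: (svalP (cid (fibre a))).
exists s; split=> //; apply/continuousP => O oO.
have -> : s @^-1` O = ~` (lam @` (C `&` ~` O)).
  apply/seteqP; split=> a /=.
    move=> Oa [x [Cx nOx] lx]; apply: nOx.
    by rewrite -(fibre_uniq _ _ (sC' a) Cx) ?lx ?s_sec.
  move=> h; apply: contrapT => nO; apply: h; exists (s a) => //.
apply: closed_openC; apply: compact_closed; first exact: pg_hausdorff.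
apply: continuous_compact; first exact/continuous_subspaceT/(ce_lam_hom w).1.
apply: (subclosed_compact _ (@pg_compact U)) => //.
by apply: closedI => //; exact: open_closedC.
Qed.

Lemma cext_section : exists s : Ub -> U, continuous s /\ forall a, lam (s a) = a.
Proof.
have [C [[_ cC] sC satC]] := clopen_slice_cover.
exact: slice_section cC sC satC.
Qed.

End ContinuousSection.

(* Over a prime field, an additive subgroup of F^m is a subspace, hence the
   row space of the matrix listing its elements. *)
Lemma subgroup_rowspace (q : nat) m (W : 'rV['F_q]_m -> Prop) :
  W 0 -> (forall r1 r2, W r1 -> W r2 -> W (r1 + r2)) ->
  exists n (A : 'M['F_q]_(n, m)), forall r, W r <-> (r <= A)%MS.
Proof.
move=> W0 WD.
pose Wset := [set r : 'rV['F_q]_m | `[< W r >]]%SET.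
have WsetP r : r \in Wset <-> W r by rewrite inE; split=> /asboolP.
have WZ (c : 'F_q) r : W r -> W (c *: r).
  move=> Wr; rewrite -[c]natr_Zp scaler_nat.
  by elim: (c : nat) => [|n IH]; rewrite ?mulr0n // mulrS; apply: WD.
exists #|Wset|, (\matrix_(i < #|Wset|) enum_val i) => r; split=> [Wr|].
  have rW : r \in Wset by apply/WsetP.
  by rewrite -[r](enum_rankK_in rW rW) -(rowK (fun i => enum_val i)) row_sub.
move=> /submxP [D ->]; rewrite mulmx_sum_row.
apply: (big_ind W) => // i _; apply: WZ; rewrite rowK; apply/WsetP.
exact: enum_valP.
Qed.

Lemma separating_functional_Fp (q : nat) m
    (W : ('I_m -> 'F_q) -> Prop) (v : 'I_m -> 'F_q) :
  W (fun _ => 0) -> (forall a b, W a -> W b -> W (fun j => a j + b j)) -> ~ W v ->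
  exists k : 'I_m -> int,
    (forall a, W a -> \sum_j a j *~ k j = 0) /\ \sum_j v j *~ k j <> 0.
Proof.
move=> W0 WD nWv.
pose Wr (r : 'rV['F_q]_m) := W (fun j => r 0 j).
have rowK' (a : 'I_m -> 'F_q) : (fun j => (\row_l a l) 0 j) = a.
  by apply: funext => j; rewrite mxE.
have [|r1 r2 W1 W2|n [A WA]] := @subgroup_rowspace q m Wr.
- rewrite /Wr; have -> : (fun j => (0 : 'rV['F_q]_m) 0 j) = fun _ => 0.
    by apply: funext => j; rewrite mxE.
  exact: W0.
- rewrite /Wr; have -> : (fun j => (r1 + r2) 0 j) = fun j => r1 0 j + r2 0 j.
    by apply: funext => j; rewrite mxE.
  exact: WD.
have nsub : ~~ (\row_j v j <= A)%MS by apply/negP => /WA; rewrite /Wr rowK'.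
have [j vj] : exists j, (\row_l v l *m cokermx A) 0 j != 0.
  apply: contrapT => nh; move: nsub; rewrite submxE => /eqP; apply.
  apply/matrixP => i j; rewrite ord1 [RHS]mxE; apply: contrapT => hne.
  by apply: nh; exists j; apply/eqP.
have functionalE (a : 'I_m -> 'F_q) :
    \sum_l a l *~ (nat_of_ord (cokermx A l j))%:Z = (\row_l a l *m cokermx A) 0 j.
  rewrite [RHS]mxE; apply: eq_bigr => l _; rewrite [X in X * _]mxE.
  by rewrite -pmulrn -mulr_natr natr_Zp.
exists (fun l => (nat_of_ord (cokermx A l j))%:Z); split; last first.
  by rewrite functionalE; exact/eqP.
move=> a Wa; rewrite functionalE.
have /WA : Wr (\row_l a l) by rewrite /Wr rowK'.
by rewrite submxE => /eqP ->; rewrite mxE.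
Qed.

Lemma separating_functional (q : nat) (hq : prime q) m
    (W : ('I_m -> 'Z_q) -> Prop) (v : 'I_m -> 'Z_q) :
  W (fun _ => 0) -> (forall a b, W a -> W b -> W (fun j => a j + b j)) -> ~ W v ->
  exists k : 'I_m -> int,
    (forall a, W a -> \sum_j a j *~ k j = 0) /\ \sum_j v j *~ k j <> 0.
Proof. by have := @separating_functional_Fp q m; rewrite (pdiv_id hq); apply. Qed.

Section InfInjectiveConverse.
Variables (p : nat) (I : Type) (i0 : I) (Om : I -> cext p) (G : profGroup).
Local Notation "x \* y" := (pg_mul x y) (at level 40, left associativity).

(* Compactness: if n is outside N1 T(G), finitely many continuous
   homomorphisms G -> U_i already separate n from N1. *)
Lemma separating_homs (N1 : set G) n : closed N1 -> ~ setmul N1 (T_Om Om G) n ->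
  exists m (wj : 'I_m -> I) (fj : forall j, G -> ce_U (Om (wj j))),
    (forall j, conthom (fj j)) /\ ~ exists2 a, N1 a & forall j, fj j a = fj j n.
Proof.
move=> cN1 nNT.
pose J := {i : I & {f : G -> ce_U (Om i) | conthom f}}.
pose O (j : J) := ~` N1 `|` [set a | sval (projT2 j) a <> sval (projT2 j) n].
have O_open j : open (O j).
  apply: openU; first exact: closed_openC.
  case: j => i [f [cf _]] /=.
  apply: (@closed_openC _ (f @^-1` [set f n])).
  apply: preimage_closed; first by move=> y _; exact: cf.
  by apply: accessible_closed_set1; apply: hausdorff_accessible; exact: pg_hausdorff.
have O_cover a : exists j, O j a.
  have [N1a|nN1a] := pselect (N1 a); last first.
    by exists (existT _ i0 (exist _ _ (conthom_one G (ce_U (Om i0))))); left.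
  have [i [f [hf fan]]] : exists i (f : G -> ce_U (Om i)),
      conthom f /\ f a <> f n.
    apply: contrapT => nf; apply: nNT; exists a => //.
    exists (pg_mul (pg_inv a) n); last by rewrite pg_mulKV.
    move=> i f hf; rewrite hf.2 (conthomV _ hf); apply: contrapT => ne.
    by apply: nf; exists i, f; split=> // e; apply: ne; rewrite e pg_mulV.
  by exists (existT _ i (exist _ f hf)); right.
have [m [js cov]] := finite_subcover (@pg_compact G) O_open O_cover.
exists m, (fun j => projT1 (js j)), (fun j => sval (projT2 (js j))); split.
  by move=> j; exact: svalP (projT2 (js j)).
move=> [a N1a fa]; have [j [nN1a|nfa]] := cov a; [exact: nN1a N1a | exact: nfa (fa j)].
Qed.

Lemma in_H2pi0 (N : set G) : in_H2pi Om N (fun _ _ => 0).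
Proof.
split; first by split=> [|x y z]; [split=> //; exact: lc_cst | ring].
exists 0%N, (fun _ => i0), (fun _ _ => pg_one _), (fun _ _ _ => 0), (fun _ => 0).
do 2!split=> [[]//|]; exists (fun _ => 0).
by split=> [|x y]; [split=> //; exact: lc_cst | rewrite big_ord0 /cobound; ring].
Qed.

Lemma coordinate_class (N : set G) m (wj : 'I_m -> I)
    (fj : forall j, G -> ce_U (Om (wj j))) (k : 'I_m -> int) :
  N `<=` Tbar_Om Om G -> (forall j, conthom (fj j)) ->
  exists f, exists H : G -> 'Z_p,
  [/\ in_H2pi Om N f, locally_constant H, forall x y, f x y = - cobound H x y &
      forall x t, N t -> H (x \* t) = H x + \sum_j iota_inv (fj j t) *~ k j].
Proof.
move=> NT fj_hom.
have sect j : {s : ce_Ub (Om (wj j)) -> ce_U (Om (wj j)) |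
    continuous s /\ forall a, ce_lam (s a) = a}.
  by apply: cid; exact: cext_section.
pose c j (a b : ce_Ub (Om (wj j))) := iota_inv (pg_mul (pg_mul (sval (sect j) a)
  (sval (sect j) b)) (pg_inv (sval (sect j) (pg_mul a b)))).
have c_ext j : ext_cocycle (c j).
  have [s_cont s_sec] := svalP (sect j).
  exists (sval (sect j)); split=> // a b; apply: iota_invK.
  rewrite !(ce_lam_hom _).2 (conthomV _ (ce_lam_hom _)) !s_sec; exact: pg_mulVr.
pose rb (j : 'I_m) := @ce_lam _ (Om (wj j)) \o fj j.
have rb_hom j : conthom (rb j) := conthom_comp (fj_hom j) (ce_lam_hom _).
have rbN j t : N t -> rb j t = pg_one _ by move=> Nt; exact: Tbar_trivial NT (rb_hom j) Nt.
have [H [lcH HE Hshift]] := pullback_coboundary k fj_hom (fun j x => erefl (rb j x)) c_ext.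
exists (fun x y => \sum_j c j (rb j x) (rb j y) *~ k j), H; split=> //.
- apply: pullback_in_H2pi c_ext => j; split=> //; first by move=> t; exact: rbN.
  by exists (fj j).
- by move=> x t Nt; apply: Hshift => j; exact: rbN.
Qed.

Lemma separating_weights (hp : prime p) (N1 N2 : set G) m (wj : 'I_m -> I)
    (fj : forall j, G -> ce_U (Om (wj j))) n :
  closed_normal N1 -> N1 `<=` N2 -> N2 `<=` Tbar_Om Om G ->
  (forall j, conthom (fj j)) -> N2 n ->
  ~ (exists2 a, N1 a & forall j, fj j a = fj j n) ->
  exists k : 'I_m -> int,
    (forall a, N1 a -> \sum_j iota_inv (fj j a) *~ k j = 0) /\
    \sum_j iota_inv (fj j n) *~ k j <> 0.
Proof.
move=> hN1 h12 hN2T fj_hom N2n sep.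
pose vec a j := iota_inv (fj j a).
have lam_fj j t : N2 t -> ce_lam (fj j t) = pg_one _.
  by move=> N2t; exact: Tbar_trivial hN2T (conthom_comp (fj_hom j) (ce_lam_hom _)) N2t.
have [|||k [kN1 kn]] := @separating_functional p hp m
  (fun v => exists2 a, N1 a & vec a = v) (vec n).
- exists (pg_one G); first by case: hN1.
  by apply: funext => j; rewrite /vec (conthom1 (fj_hom j)) -(iota0 (Om (wj j))) iota_invE.
- move=> _ _ [a N1a <-] [b N1b <-]; exists (a \* b); first exact: closed_normalM.
  apply: funext => j; rewrite /vec (fj_hom j).2 iota_invM //; exact/lam_fj/h12.
- move=> [a N1a ea]; apply: sep; exists a => // j.
  rewrite -(iota_invK (lam_fj j a (h12 _ N1a))) -(iota_invK (lam_fj j n N2n)).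
  by rewrite -/(vec a j) ea.
by exists k; split=> // a N1a; apply: kN1; exists a.
Qed.

(* If n in N2 lies outside N1 T(G), separate it from N1 by
   homomorphisms f_j and choose, by linear algebra, integers k_j killing
   the iota-coordinates of N1 but not those of n.  The corresponding class
   f = -dH is trivial over N1 (H is N1-invariant), so by injectivity
   f = dg with g N2-invariant; then g + H is a locally constant
   homomorphism, which must vanish at n in Tbar(G): contradiction. *)
Lemma NT_of_inf_injective (hp : prime p) (hII : condII (Om i0)) (N1 N2 : set G) :
  closed_normal N1 -> N1 `<=` N2 -> N2 `<=` Tbar_Om Om G ->
  (forall f1 f2, in_H2pi Om N2 f1 -> in_H2pi Om N2 f2 ->
     cohom N1 f1 f2 -> cohom N2 f1 f2) ->
  forall n, N2 n -> setmul N1 (T_Om Om G) n.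
Proof.
move=> hN1 h12 hN2T inj n N2n; apply: contrapT => nNT.
have [m [wj [fj [fj_hom sep]]]] := separating_homs (let: And4 cN1 _ _ _ := hN1 in cN1) nNT.
have [k [kN1 kn]] := separating_weights hp hN1 h12 hN2T fj_hom N2n sep.
have [f [H [f_in lcH fE Hshift]]] := coordinate_class k hN2T fj_hom.
have f_triv_N1 : cohom N1 f (fun _ _ => 0).
  exists (fun x => - H x); split.
    split=> [|x a N1a]; first exact: (lc_map (fun a => - a)).
    by rewrite Hshift ?kN1 ?addr0 //; exact: h12.
  by move=> x y; rewrite -/(cobound (fun z => - H z) x y) coboundN -fE subr0.
have [g [[gc gN] fg]] := inj _ _ f_in (in_H2pi0 N2) f_triv_N1.
pose chi x := g x + H x.
have chiM : forall x y, chi (x \* y) = chi x + chi y.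
  apply: cobound0_hom => x y; have e := fg x y; rewrite -/(cobound g x y) in e.
  by rewrite coboundD -e fE subr0 addNr.
have chi_n : chi n = 0.
  apply: (lc_hom_TU hII _ chiM (hN2T _ N2n i0)).
  exact: (lc_map2 +%R gc lcH).
have chi1 : chi (pg_one G) = 0.
  by apply: (@addrI _ (chi (pg_one G))); rewrite -chiM pg_mul1 addr0.
apply: kn; move: chi_n; rewrite -[n]pg_mul1 /chi gN // Hshift // pg_mul1 addrA.
by rewrite -/(chi (pg_one G)) chi1 add0r.
Qed.

End InfInjectiveConverse.

Unset Implicit Arguments. Set Strict Implicit. Set Printing Implicit Defensive.
Local Close Scope ring_scope.

Theorem corollary7p3 (p : nat) (hp : prime p) (I : Type) (i0 : I)
    (Om : I -> cext p) (hI : forall i, condI (Om i)) (hII : forall i, condII (Om i))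
    (G : profGroup) (N1 N2 : set G)
    (hN1 : closed_normal N1) (hN2 : closed_normal N2) (h12 : N1 `<=` N2)
    (hN1T : N1 `<=` Tbar_Om Om G) (hN2T : N2 `<=` Tbar_Om Om G) :
  let inj := forall f1 f2, in_H2pi Om N2 f1 -> in_H2pi Om N2 f2 ->
               cohom N1 f1 f2 -> cohom N2 f1 f2 in
  let iso := [/\ (forall f, in_H2pi Om N2 f -> in_H2pi Om N1 f), inj &
                 (forall f, in_H2pi Om N1 f ->
                    exists2 f', in_H2pi Om N2 f' & cohom N1 f f')] in
  (iso <-> inj) /\ (inj <-> setmul N1 (T_Om Om G) = setmul N2 (T_Om Om G)).
Proof.
move=> inj iso; split.
  split=> [[]//|inf_inj]; split=> // f.
  - exact: in_H2pi_inf.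
  - exact: inf_surjective.
split; last exact: (inf_injective_of_NT (hII i0)).
move=> inf_inj; apply/seteqP; split=> _ [a Na [t Tt ->]].
  by exists a; [exact: h12 | exists t].
have [a' N1a' [t' Tt' ->]] := NT_of_inf_injective hp (hII i0) hN1 h12 hN2T inf_inj Na.
by exists a' => //; exists (pg_mul t' t); [exact: T_OmM | rewrite pg_mulA].
Qed.
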